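(* (1) The set of reaction networks that have the capacity for weak reversibility strictly contains the set of weakly reversible reaction networks. (2) The set of reaction networks that have the capacity to be endotactic strictly contains the set of endotactic reaction networks.
   Context: A reaction network (E-graph) $\mathcal{G}=(\mathcal{V},\mathcal{E})$ is a finite directed graph whose nodes are distinct elements of a finite set $Y\subset\mathbb{R}^d_{\ge 0}$, with $\mathcal{V}\neq\emptyset$, every node incident to at least one edge, and no edge from a node to itself. For an edge $e$, $\mathbf{s}(e)$ is its source node, $\mathbf{t}(e)$ its target node, and $\mathbf{v}(e)=\mathbf{t}(e)-\mathbf{s}(e)$ its reaction vector. Given positive rate constants $(k_e)_{e\in\mathcal{E}}$, $\mathcal{G}$ generates the mass-action system $\frac{d\mathbf{x}}{dt}=\sum_{e\in\mathcal{E}}k_e\mathbf{x}^{\mathbf{s}(e)}\mathbf{v}(e)$, where $\mathbf{x}^{\mathbf{y}}=\prod_i x_i^{y_i}$ and $0^0=1$. Two networks $\mathcal{G}_1,\mathcal{G}_2$ have the capacity for dynamical equivalence if there exist positive rate constants for each such that the generated right-hand sides coincide for all $\mathbf{x}$. $\mathcal{G}$ is weakly reversible if every edge lies in a directed cycle. $\mathcal{G}$ is endotactic if for every $\mathbf{w}\in\mathbb{R}^d$ and every $e_i\in\mathcal{E}$ with $\mathbf{w}\cdot\mathbf{v}(e_i)<0$ there exists $e_j\in\mathcal{E}$ with $\mathbf{w}\cdot(\mathbf{s}(e_j)-\mathbf{s}(e_i))<0$ and $\mathbf{w}\cdot\mathbf{v}(e_j)>0$. A network has the capacity for weak reversibility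 (resp. to be endotactic) if it has the capacity for dynamical equivalence with some weakly reversible (resp. endotactic) network. *)

From mathcomp Require Import all_boot all_order all_algebra.
From mathcomp Require Import all_classical all_reals all_analysis.
Set Implicit Arguments. Unset Strict Implicit. Unset Printing Implicit Defensive.
Import Order.TTheory GRing.Theory Num.Theory.
Local Open Scope ring_scope.

(* A complex / node is a row vector y in R^d; an edge (reaction) is a pair
   (source, target). A reaction network is given by its finite list of
   (distinct) edges; its node set is the set of endpoints of the edges. *)
Definition edge (R : realType) (d : nat) := ('rV[R]_d * 'rV[R]_d)%type.

Definition is_network (R : realType) (d : nat) (E : seq (edge R d)) : Prop :=
  [/\ E != [::], uniq E,
      (forall e, e \in E -> e.1 != e.2) &
      (forall e, e \in E -> forall i, 0 <= e.1 ord0 i /\ 0 <= e.2 ord0 i)].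

(* x^y = prod_i x_i^{y_i}, with powR (0 `^ 0 = 1). *)
Definition monomial (R : realType) (d : nat) (x y : 'rV[R]_d) : R :=
  \prod_(i < d) powR (x ord0 i) (y ord0 i).

Definition mass_action_rhs (R : realType) (d : nat) (E : seq (edge R d))
    (k : edge R d -> R) (x : 'rV[R]_d) : 'rV[R]_d :=
  \sum_(e <- E) (k e * monomial x e.1) *: (e.2 - e.1).

Definition positive_rates (R : realType) (d : nat) (E : seq (edge R d))
    (k : edge R d -> R) : Prop :=
  forall e, e \in E -> 0 < k e.

Definition capacity_dyn_equiv (R : realType) (d : nat)
    (E1 E2 : seq (edge R d)) : Prop :=
  exists k1 k2, positive_rates E1 k1 /\ positive_rates E2 k2 /\
    forall x : 'rV[R]_d, (forall i, 0 <= x ord0 i) ->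
      mass_action_rhs E1 k1 x = mass_action_rhs E2 k2 x.

Inductive reach (R : realType) (d : nat) (E : seq (edge R d))
    : 'rV[R]_d -> 'rV[R]_d -> Prop :=
  | reach_refl a : reach E a a
  | reach_step a b c : (a, b) \in E -> reach E b c -> reach E a c.

(* every edge lies in a directed cycle: its target reaches its source *)
Definition weakly_reversible (R : realType) (d : nat) (E : seq (edge R d)) : Prop :=
  forall e, e \in E -> reach E e.2 e.1.

Definition dotv (R : realType) (d : nat) (u v : 'rV[R]_d) : R :=
  \sum_(i < d) u ord0 i * v ord0 i.

Definition endotactic (R : realType) (d : nat) (E : seq (edge R d)) : Prop :=
  forall (w : 'rV[R]_d) (ei : edge R d), ei \in E ->
    dotv w (ei.2 - ei.1) < 0 ->
    exists ej, ej \in E /\ dotv w (ej.1 - ei.1) < 0 /\ 0 < dotv w (ej.2 - ej.1).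

Definition capacity_WR (R : realType) (d : nat) (E : seq (edge R d)) : Prop :=
  exists E', is_network E' /\ weakly_reversible E' /\ capacity_dyn_equiv E E'.

Definition capacity_endotactic (R : realType) (d : nat) (E : seq (edge R d)) : Prop :=
  exists E', is_network E' /\ endotactic E' /\ capacity_dyn_equiv E E'.

(** The inclusions hold because every network is dynamically equivalent to
    itself.  For strictness, work in dimension one with the network
    [1 -> 0, 1 -> 2, 0 -> 1].  Giving [1 -> 0] rate 2 and the other
    reactions rate 1, the reactions out of the complex 1 have net reaction
    vector [2 * (-1) + 1 = -1], so the network generates the same
    mass-action system as the weakly reversible, endotactic network
    [0 <-> 1].  It is not weakly reversible, since 2 is a sink, and it is
    not endotactic, since [1 -> 2] points to the right while no source lies
    to the right of 1. *)

From mathcomp Require Import all_boot all_order all_algebra.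
From mathcomp Require Import all_classical all_reals all_analysis.
From mathcomp Require Import ring lra.
Set Implicit Arguments. Unset Strict Implicit. Unset Printing Implicit Defensive.
Import Order.TTheory GRing.Theory Num.Theory.
Local Open Scope ring_scope.

Section GeneralFacts.
Variables (R : realType) (d : nat).
Implicit Types E : seq (edge R d).

Lemma capacity_dyn_equiv_refl E : capacity_dyn_equiv E E.
Proof.
by exists (fun _ => 1), (fun _ => 1); split; [|split] => // e _; apply: ltr01.
Qed.

Lemma weakly_reversible_capacity_WR E :
  is_network E -> weakly_reversible E -> capacity_WR E.
Proof.
by move=> netE wrE; exists E; split; [|split]; last exact: capacity_dyn_equiv_refl.
Qed.

Lemma endotactic_capacity_endotactic E :
  is_network E -> endotactic E -> capacity_endotactic E.
Proof.
by move=> netE endoE; exists E; split; [|split]; last exact: capacity_dyn_equiv_refl.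
Qed.

Lemma reach_from_sink E a c :
  (forall b, (a, b) \notin E) -> reach E a c -> c = a.
Proof. by move=> sink_a h; case: h sink_a => // a' b c' ab _ /(_ b); rewrite ab. Qed.

Lemma edge_into_sink_not_weakly_reversible E a b :
  (a, b) \in E -> a != b -> (forall c, (b, c) \notin E) -> ~ weakly_reversible E.
Proof.
move=> abE a_neq_b sink_b /(_ _ abE) /= /(reach_from_sink sink_b) a_eq_b.
by rewrite a_eq_b eqxx in a_neq_b.
Qed.

End GeneralFacts.

Section OneDimensionalExample.
Variable R : realType.

Definition node (n : nat) : 'rV[R]_1 := const_mx n%:R.

Lemma nodeE n i j : node n i j = n%:R.
Proof. by rewrite mxE. Qed.

Lemma node_eq m n : (node m == node n) = (m == n).
Proof.
apply/eqP/eqP => [/rowP/(_ ord0)|-> //].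
by rewrite !nodeE => /eqP; rewrite eqr_nat => /eqP.
Qed.

Lemma dotv1 (u v : 'rV[R]_1) : dotv u v = u ord0 ord0 * v ord0 ord0.
Proof. by rewrite /dotv big_ord1. Qed.

Definition E_split : seq (edge R 1) :=
  [:: (node 1, node 0); (node 1, node 2); (node 0, node 1)].

Definition E_cycle : seq (edge R 1) := [:: (node 0, node 1); (node 1, node 0)].

Lemma is_network_of_nodes (E : seq (edge R 1)) :
  E != [::] -> uniq E -> (forall e, e \in E -> e.1 != e.2) ->
  (forall e, e \in E -> exists m n, e = (node m, node n)) -> is_network E.
Proof.
move=> E_neq0 uniqE loopless nodesE; split => // e /nodesE [m [n ->]] i.
by rewrite !nodeE !ler0n.
Qed.

Lemma is_network_split : is_network E_split.
Proof.
apply: is_network_of_nodes => //.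
- by rewrite /= !inE !xpair_eqE !node_eq.
- by move=> e; rewrite !inE => /or3P [] /eqP -> /=; rewrite node_eq.
- by move=> e; rewrite !inE => /or3P [] /eqP ->; do 2 eexists.
Qed.

Lemma is_network_cycle : is_network E_cycle.
Proof.
apply: is_network_of_nodes => //.
- by rewrite /= !inE !xpair_eqE !node_eq.
- by move=> e; rewrite !inE => /orP [] /eqP -> /=; rewrite node_eq.
- by move=> e; rewrite !inE => /orP [] /eqP ->; do 2 eexists.
Qed.

Lemma capacity_dyn_equiv_split_cycle : capacity_dyn_equiv E_split E_cycle.
Proof.
exists (fun e => if e == (node 1, node 0) then 2 else 1), (fun _ => 1).
split; [|split].
- by move=> e _; case: ifP.
- by move=> e _; apply: ltr01.
- move=> x _; rewrite /mass_action_rhs !big_cons !big_nil /= !xpair_eqE !node_eq /=.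
  apply/rowP => i; rewrite !mxE.
  ring.
Qed.

Lemma weakly_reversible_cycle : weakly_reversible E_cycle.
Proof.
move=> e; rewrite !inE => /orP [] /eqP -> /=;
  by apply: reach_step (reach_refl _ _); rewrite !inE eqxx ?orbT.
Qed.

Lemma not_weakly_reversible_split : ~ weakly_reversible E_split.
Proof.
apply: (@edge_into_sink_not_weakly_reversible _ _ _ (node 1) (node 2)).
- by rewrite !inE eqxx orbT.
- by rewrite node_eq.
- by move=> c; rewrite !inE !xpair_eqE !node_eq.
Qed.

Lemma endotactic_cycle : endotactic E_cycle.
Proof.
move=> w ei; rewrite !inE => /orP [] /eqP -> /=; rewrite dotv1 !mxE => w_lt0.
- exists (node 1, node 0); rewrite !inE eqxx orbT !dotv1 !mxE; split; [done | lra].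
- exists (node 0, node 1); rewrite !inE eqxx !dotv1 !mxE; split; [done | lra].
Qed.

Lemma not_endotactic_split : ~ endotactic E_split.
Proof.
move=> /(_ (const_mx (-1)) (node 1, node 2)).
rewrite !inE eqxx orbT /= dotv1 !mxE => /(_ isT) [|ej []]; first lra.
by rewrite !inE => /or3P [] /eqP -> /=; rewrite !dotv1 !mxE; lra.
Qed.

End OneDimensionalExample.

Theorem theorem1 (R : realType) :
  ((forall (d : nat) (E : seq (edge R d)),
       is_network E -> weakly_reversible E -> capacity_WR E) /\
   (exists (d : nat) (E : seq (edge R d)),
       is_network E /\ capacity_WR E /\ ~ weakly_reversible E)) /\
  ((forall (d : nat) (E : seq (edge R d)),
       is_network E -> endotactic E -> capacity_endotactic E) /\
   (exists (d : nat) (E : seq (edge R d)),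
       is_network E /\ capacity_endotactic E /\ ~ endotactic E)).
Proof.
have cycle_net := @is_network_cycle R.
have split_equiv_cycle := @capacity_dyn_equiv_split_cycle R.
have split_capacity_WR : capacity_WR (E_split R).
  by exists (E_cycle R); do 2 split => //; exact: weakly_reversible_cycle.
have split_capacity_endotactic : capacity_endotactic (E_split R).
  by exists (E_cycle R); do 2 split => //; exact: endotactic_cycle.
split; split.
- exact: weakly_reversible_capacity_WR.
- exists 1%N, (E_split R).
  by split; [exact: is_network_split | split; last exact: not_weakly_reversible_split].
- exact: endotactic_capacity_endotactic.
- exists 1%N, (E_split R).
  by split; [exact: is_network_split | split; last exact: not_endotactic_split].
Qed.
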